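(* For every labelled program $P$ and interpretation $I\subseteq \mathit{At}$: $I \in \mathit{JM}(P)$ if and only if $I \in \mathit{JM}(P^I)$.
   Context: Fix a finite non-empty set $\mathit{At}$ of propositional atoms. A labelled rule $r$ has the form $\ell : p_1 \vee \dots \vee p_m \leftarrow q_1 \wedge \dots \wedge q_n \wedge \neg s_1 \wedge \dots \wedge \neg s_j \wedge \neg\neg t_1 \wedge \dots \wedge \neg\neg t_k$ with $m,n,j,k \ge 0$ and atoms in $\mathit{At}$; $\mathit{Lb}(r)=\ell$, $\mathit{Hd}(r)=p_1\vee\dots\vee p_m$, $H(r)=\{p_1,\dots,p_m\}$, $\mathit{Bd}(r)$ is the whole antecedent, $\mathit{Bd}^+(r)=q_1\wedge\dots\wedge q_n$, $B^+(r)=\{q_1,\dots,q_n\}$, $\mathit{Bd}^-(r)=\neg s_1 \wedge \dots \wedge \neg s_j \wedge \neg\neg t_1 \wedge \dots \wedge \neg\neg t_k$. Empty disjunction is $\bot$, empty conjunction $\top$. A labelled program $P$ is a finite set of labelled rules with no repeated label; $\mathit{Lb}(P)$ is its set of labels. An interpretation $I\subseteq\mathit{At}$ is a (classical) model of $P$ if $I\models \mathit{Bd}(r)\to\mathit{Hd}(r)$ for every $r\in P$. The reduct is $P^I=\{\ \mathit{Lb}(r): \mathit{Hd}(r) \leftarrow \mathit{Bd}^+(r) \mid r \in P,\ I \models \mathit{Bd}^-(r)\ \}$. $\mathit{Sup}(I,P,p)=\{ r \in P \mid p \in H(r),\ I \models \mathit{Bd}(r)\}$. A support graph of a model $I$ under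 $P$ is a directed graph $G=\langle I,E,\lambda\rangle$ with vertex set $I$, edges $E\subseteq I\times I$ and a labelling $\lambda: I\to \mathit{Lb}(P)$ such that (i) $\lambda$ is injective, and (ii) for every $p\in I$, the rule $r\in P$ with $\mathit{Lb}(r)=\lambda(p)$ satisfies $r\in \mathit{Sup}(I,P,p)$ and $B^+(r)=\{q \mid (q,p)\in E\}$. An explanation is an acyclic support graph. A classical model $I$ of $P$ is a justified model of $P$ if there is some explanation of $I$ under $P$; $\mathit{JM}(P)$ denotes the set of justified models of $P$. *)

From mathcomp Require Import all_boot.
Set Implicit Arguments. Unset Strict Implicit. Unset Printing Implicit Defensive.

Section LP.
Variables (At : finType) (Lab : eqType).

(* a rule is (label, head atoms p_i, positive body q_i, negated atoms s_i,
   doubly negated atoms t_i); encoded as a product to get an eqType *)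
Definition rule : eqType := (Lab * seq At * seq At * seq At * seq At)%type.
Definition Rule (l : Lab) (h bp bn bnn : seq At) : rule := (l, h, bp, bn, bnn).
Definition Lb (r : rule) : Lab := r.1.1.1.1.
Definition H (r : rule) : seq At := r.1.1.1.2.
Definition Bpos (r : rule) : seq At := r.1.1.2.
Definition Bneg (r : rule) : seq At := r.1.2.
Definition Bnn (r : rule) : seq At := r.2.

Definition program := seq rule.
Definition wf_program (P : program) : bool := uniq (map Lb P).
Definition Lbs (P : program) : seq Lab := map Lb P.

Definition interp := {set At}.

Definition sat_Bdpos (I : interp) (r : rule) : bool := all (fun q => q \in I) (Bpos r).
Definition sat_Bdneg (I : interp) (r : rule) : bool :=
  all (fun s => s \notin I) (Bneg r) && all (fun t => t \in I) (Bnn r).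
Definition sat_Bd (I : interp) (r : rule) : bool := sat_Bdpos I r && sat_Bdneg I r.
Definition sat_Hd (I : interp) (r : rule) : bool := has (fun p => p \in I) (H r).

Definition is_model (I : interp) (P : program) : bool :=
  all (fun r => sat_Bd I r ==> sat_Hd I r) P.

Definition reduct (P : program) (I : interp) : program :=
  [seq Rule (Lb r) (H r) (Bpos r) [::] [::] | r <- P & sat_Bdneg I r].

Definition supports (I : interp) (P : program) (p : At) (r : rule) : Prop :=
  r \in P /\ p \in H r /\ sat_Bd I r.

Definition support_graph (I : interp) (P : program)
    (E : rel At) (lam : At -> Lab) : Prop :=
  (forall q p, E q p -> q \in I /\ p \in I) /\
  {in I &, injective lam} /\
  (forall p, p \in I -> exists r, r \in P /\ Lb r = lam p /\
       supports I P p r /\ (forall q, q \in Bpos r <-> E q p)).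

Definition acyclic (E : rel At) : Prop :=
  forall x s, path E x s -> last x s = x -> s = [::].

Definition explanation (I : interp) (P : program) E lam : Prop :=
  support_graph I P E lam /\ acyclic E.

Definition justified_model (P : program) (I : interp) : Prop :=
  is_model I P /\ exists E lam, explanation I P E lam.

End LP.

(* A rule enters the reduct P^I exactly when I satisfies its negative body,
   and then keeps its label, head and positive body.  Hence, under I, a rule
   of P fires iff its reduct fires, with the same head; so I is a model of
   P iff it is a model of P^I, and the support graphs of I under P and
   under P^I (whose edges only see labels, heads and positive bodies)
   coincide. *)
From mathcomp Require Import all_boot.

Set Implicit Arguments.
Unset Strict Implicit.
Unset Printing Implicit Defensive.

Section Reduct.
Variables (At : finType) (Lab : eqType).
Implicit Types (P : program At Lab) (I : interp At) (r : rule At Lab).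

Definition reduct_rule r : rule At Lab := Rule (Lb r) (H r) (Bpos r) [::] [::].

Lemma sat_Bd_reduct_rule I r : sat_Bd I (reduct_rule r) = sat_Bdpos I r.
Proof. by rewrite /sat_Bd /sat_Bdneg andbT. Qed.

Lemma mem_reduct P I r' :
  r' \in reduct P I <-> exists2 r, r \in P /\ sat_Bdneg I r & r' = reduct_rule r.
Proof.
split=> [/mapP [r] | [r [Pr negr] ->]]; last by apply: map_f; rewrite mem_filter negr.
by rewrite mem_filter => /andP [negr Pr] ->; exists r.
Qed.

Lemma is_model_reduct P I : is_model I (reduct P I) = is_model I P.
Proof.
rewrite /is_model all_map all_filter; apply: eq_all => r /=.
by rewrite sat_Bd_reduct_rule /sat_Bd; case: (sat_Bdpos I r); case: (sat_Bdneg I r).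
Qed.

Lemma supports_reduct P I p r' :
  supports I (reduct P I) p r' <->
  exists2 r, supports I P p r & r' = reduct_rule r.
Proof.
split=> [[/mem_reduct [r [Pr negr] ->]] | [r [Pr [pr /andP [posr negr]]] ->]].
  rewrite sat_Bd_reduct_rule => -[pr posr].
  by exists r; do 2!split=> //; rewrite /sat_Bd posr.
by split; [apply/mem_reduct; exists r | rewrite sat_Bd_reduct_rule].
Qed.

Lemma support_graph_reduct P I E lam :
  support_graph I (reduct P I) E lam <-> support_graph I P E lam.
Proof.
split=> -[EI [lam_inj sup]]; do 2!split=> //; move=> p /sup [r [_ [lbr [supr Er]]]].
  have [r0 supr0 def_r] := (supports_reduct P I p r).1 supr.
  by exists r0; rewrite def_r in lbr Er; case: supr0.
have supr' : supports I (reduct P I) p (reduct_rule r).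
  by apply/supports_reduct; exists r.
by exists (reduct_rule r); case: supr'.
Qed.

Lemma justified_model_reduct P I :
  justified_model (reduct P I) I <-> justified_model P I.
Proof.
rewrite /justified_model /explanation is_model_reduct.
by split=> -[M [E [lam [/support_graph_reduct G acE]]]]; split=> //; exists E, lam.
Qed.

End Reduct.

Theorem corollary1 (At : finType) (Lab : eqType) (a0 : At)
    (P : program At Lab) (I : interp At) :
  wf_program P ->
  justified_model P I <-> justified_model (reduct P I) I.
Proof. by move=> _; apply: iff_sym; apply: justified_model_reduct. Qed.
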